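(* Let $d \ge 1$ be an integer, let $\phi \in \mathbb{R}$, and put $\phi' = -(2+\phi)$. Let \[ Q = \begin{pmatrix}1&0&0&0\\0&1&0&0\\0&0&1&0\\0&0&0&-1\end{pmatrix}. \] Then for every integer $t \ge 0$, every position $n \in \{0,1,\dots,d-1\}$ and every vector $\psi(0,0) \in \mathbb{C}^4$ (specifying the initial state $\ket{0}\otimes\psi(0,0)$), \[ p(n,t,\phi;\psi(0,0)) = p(n,t,\phi';Q\,\psi(0,0)). \]
   Context: Recycled coin quantum walk on the cycle of size $d$ with two coins. The Hilbert space is $\mathcal{H}_P\otimes\mathcal{H}_{C_1}\otimes\mathcal{H}_{C_2}$, where $\mathcal{H}_P$ has orthonormal basis $\{\ket{n}: n=0,\dots,d-1\}$ and each coin space $\mathcal{H}_{C_i}$ has orthonormal basis $\{\ket{\downarrow},\ket{\uparrow}\}$; basis kets are written $\ket{n,c_1,c_2}$. For a real $\theta$, $C(\theta)$ is the operator on a coin space with $C(\theta)\ket{\downarrow}=\cos\theta\ket{\downarrow}+\sin\theta\ket{\uparrow}$ and $C(\theta)\ket{\uparrow}=\sin\theta\ket{\downarrow}-\cos\theta\ket{\uparrow}$. For a memory parameter $\phi\in\mathbb{R}$, the coin flip operator on $\mathcal{H}_{C_1}\otimes\mathcal{H}_{C_2}$ is $\widehat{C}=\ket{\downarrow}\bra{\downarrow}\otimes C(\pi/4)+\ket{\uparrow}\bra{\uparrow}\otimes C(\tfrac{\pi}{4}(1+\phi))$. The shift operator $S$ acts by $\ket{n,c_1,\downarrow}\mapsto\ket{n-1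 \bmod d,c_1,\downarrow}$ and $\ket{n,c_1,\uparrow}\mapsto\ket{n+1 \bmod d,c_1,\uparrow}$ for $c_1\in\{\downarrow,\uparrow\}$. The memory update $M$ on $\mathcal{H}_{C_1}\otimes\mathcal{H}_{C_2}$ swaps the two coins: $\ket{c_1,c_2}\mapsto\ket{c_2,c_1}$. One step of the walk is $U=(I_P\otimes M)\,S\,(I_P\otimes\widehat{C})$ (depending on $\phi$). A vector $\psi(0,0)=(a_1,a_2,a_3,a_4)^T\in\mathbb{C}^4$ (unit norm) denotes the coin state $a_1\ket{\downarrow\downarrow}+a_2\ket{\downarrow\uparrow}+a_3\ket{\uparrow\downarrow}+a_4\ket{\uparrow\uparrow}$ (first arrow = coin 1, second = coin 2), and the initial state of the walk is $\ket{\psi_0}=\ket{0}\otimes\psi(0,0)$. The position probability is $p(n,t,\phi;\psi(0,0))=\sum_{c_1,c_2\in\{\downarrow,\uparrow\}}\left|\bra{n,c_1,c_2}U^t\ket{\psi_0}\right|^2$, with $U$ built from memory parameter $\phi$. *)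

From Stdlib Require Import Reals Arith.
From Coquelicot Require Import Coquelicot.
Open Scope R_scope.

(* A state of the walk: amplitude <n,c1,c2|psi>, positions n in {0..d-1}
   (taken as nats; values at n >= d are never read by the dynamics),
   coins: false = down, true = up. *)
Definition state := nat -> bool -> bool -> C.

(* matrix element <out| C(theta) |inp> :
   C|down> = cos|down> + sin|up>,  C|up> = sin|down> - cos|up> *)
Definition coin_elem (theta : R) (out inp : bool) : R :=
  match inp, out with
  | false, false => cos theta
  | false, true => sin theta
  | true, false => sin theta
  | true, true => - cos theta
  end.

Definition coin_angle (phi : R) (c1 : bool) : R :=
  if c1 then PI / 4 * (1 + phi) else PI / 4.

Definition coin_flip (phi : R) (psi : state) : state :=
  fun n c1 c2 =>
    Cplus (Cmult (RtoC (coin_elem (coin_angle phi c1) c2 false)) (psi n c1 false))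
          (Cmult (RtoC (coin_elem (coin_angle phi c1) c2 true)) (psi n c1 true)).

(* S : |n,c1,down> -> |n-1 mod d,c1,down>, |n,c1,up> -> |n+1 mod d,c1,up> *)
Definition shift (d : nat) (psi : state) : state :=
  fun m c1 c2 =>
    if c2 then psi ((m + d - 1) mod d)%nat c1 true
    else psi ((m + 1) mod d)%nat c1 false.

Definition swap (psi : state) : state := fun n c1 c2 => psi n c2 c1.

Definition step (d : nat) (phi : R) (psi : state) : state :=
  swap (shift d (coin_flip phi psi)).

Definition walk (d : nat) (phi : R) (t : nat) (psi : state) : state :=
  Nat.iter t (step d phi) psi.

(* coin vector (a1,a2,a3,a4) = a1|dd> + a2|du> + a3|ud> + a4|uu> *)
Definition coin_vec (a1 a2 a3 a4 : C) : bool -> bool -> C :=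
  fun c1 c2 =>
    match c1, c2 with
    | false, false => a1
    | false, true => a2
    | true, false => a3
    | true, true => a4
    end.

Definition init (a : bool -> bool -> C) : state :=
  fun n c1 c2 => if Nat.eqb n 0 then a c1 c2 else RtoC 0.

Definition prob (d : nat) (n t : nat) (phi : R) (a : bool -> bool -> C) : R :=
  let s := walk d phi t (init a) in
  (Cmod (s n false false))^2 + (Cmod (s n false true))^2
  + (Cmod (s n true false))^2 + (Cmod (s n true true))^2.

Definition Qmul (a1 a2 a3 a4 : C) : bool -> bool -> C :=
  coin_vec a1 a2 a3 (Copp a4).

(* The coin flip of the up-controlled coin is C((pi/4)(1+phi)), and phi -> -(2+phi)
   negates that angle.  Conjugating C(theta) by Z = diag(1,-1) gives C(-theta), so the
   operator Q = 1 (+) Z, which flips the sign of the |uu> component, intertwines the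
   coin flips for phi and -(2+phi); it visibly commutes with the shift and the coin
   swap.  Hence U(phi') Q = Q U(phi), the walk started from Q psi is Q applied to the
   walk started from psi, and Q does not change any modulus. *)
From Stdlib Require Import Reals Arith FunctionalExtensionality.
From Coquelicot Require Import Coquelicot.
Open Scope R_scope.

Definition negate_uu (psi : state) : state :=
  fun n c1 c2 => if andb c1 c2 then Copp (psi n c1 c2) else psi n c1 c2.

Lemma state_ext (psi chi : state) :
  (forall n c1 c2, psi n c1 c2 = chi n c1 c2) -> psi = chi.
Proof.
  intros H; do 3 (apply functional_extensionality; intro); apply H.
Qed.

Lemma coin_angle_reflect (phi : R) :
  coin_angle (- (2 + phi)) true = - coin_angle phi true.
Proof. unfold coin_angle; field. Qed.

Lemma coin_flip_negate_uu (phi : R) (psi : state) :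
  coin_flip (- (2 + phi)) (negate_uu psi) = negate_uu (coin_flip phi psi).
Proof.
  apply state_ext; intros n [|] c2; [|reflexivity].
  unfold coin_flip, negate_uu; rewrite coin_angle_reflect.
  destruct c2; simpl; rewrite cos_neg, sin_neg;
    apply injective_projections; simpl; ring.
Qed.

Lemma shift_negate_uu (d : nat) (psi : state) :
  shift d (negate_uu psi) = negate_uu (shift d psi).
Proof. apply state_ext; intros n [|] [|]; reflexivity. Qed.

Lemma swap_negate_uu (psi : state) : swap (negate_uu psi) = negate_uu (swap psi).
Proof. apply state_ext; intros n [|] [|]; reflexivity. Qed.

Lemma step_negate_uu (d : nat) (phi : R) (psi : state) :
  step d (- (2 + phi)) (negate_uu psi) = negate_uu (step d phi psi).
Proof.
  unfold step; rewrite coin_flip_negate_uu, shift_negate_uu; apply swap_negate_uu.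
Qed.

Lemma walk_negate_uu (d : nat) (phi : R) (t : nat) (psi : state) :
  walk d (- (2 + phi)) t (negate_uu psi) = negate_uu (walk d phi t psi).
Proof.
  induction t as [|t IH]; [reflexivity|].
  unfold walk in *; simpl; rewrite IH; apply step_negate_uu.
Qed.

Lemma init_Qmul (a1 a2 a3 a4 : C) :
  init (Qmul a1 a2 a3 a4) = negate_uu (init (coin_vec a1 a2 a3 a4)).
Proof.
  apply state_ext; intros n [|] [|]; unfold init, negate_uu; simpl;
    destruct (Nat.eqb n 0); try reflexivity.
  apply injective_projections; simpl; ring.
Qed.

Lemma Cmod_negate_uu (psi : state) (n : nat) (c1 c2 : bool) :
  Cmod (negate_uu psi n c1 c2) = Cmod (psi n c1 c2).
Proof. unfold negate_uu; destruct (andb c1 c2); [apply Cmod_opp|reflexivity]. Qed.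

Theorem theorem1 :
  forall (d : nat) (phi : R) (t n : nat) (a1 a2 a3 a4 : C),
    (1 <= d)%nat -> (n < d)%nat ->
    prob d n t phi (coin_vec a1 a2 a3 a4)
    = prob d n t (- (2 + phi)) (Qmul a1 a2 a3 a4).
Proof.
  intros d phi t n a1 a2 a3 a4 _ _.
  unfold prob; rewrite init_Qmul, walk_negate_uu, !Cmod_negate_uu.
  reflexivity.
Qed.
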